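(* Let $k\ge3$ be odd and let $G$ be a connected $k$-uniform hypergraph (with at least one edge). Then $0$ is not an H-eigenvalue of the signless Laplacian tensor $\mathcal D+\mathcal A$, i.e. there is no nonzero $\mathbf x\in\mathbb R^n$ with $(\mathcal D+\mathcal A)\mathbf x^{k-1}=0$.
   Context: A $k$-uniform hypergraph $G=(V,E)$ has vertex set $V=[n]$ ($n\ge k$) and edge set $E$ of $k$-element subsets; $E_i=\{e\in E:i\in e\}$, $d_i=|E_i|$. $G$ is connected if any two distinct vertices are joined by a chain of edges with consecutive edges intersecting. $\mathcal A$: $a_{i_1\dots i_k}=\frac1{(k-1)!}$ if $\{i_1,\dots,i_k\}\in E$, else $0$; $\mathcal D$ diagonal with $d_{i\dots i}=d_i$; so $((\mathcal D+\mathcal A)\mathbf x^{k-1})_i=d_ix_i^{k-1}+\sum_{e\in E_i}\prod_{j\in e\setminus\{i\}}x_j$. An H-eigenvalue is an eigenvalue possessing a real eigenvector. *)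

From HB Require Import structures.
From mathcomp Require Import all_boot all_order all_algebra.
Set Implicit Arguments. Unset Strict Implicit. Unset Printing Implicit Defensive.
Import Order.TTheory GRing.Theory Num.Theory.
Local Open Scope ring_scope.

Definition k_uniform (n k : nat) (E : {set {set 'I_n}}) : Prop :=
  forall e, e \in E -> #|e| = k.

Definition edges_at (n : nat) (E : {set {set 'I_n}}) (i : 'I_n) : {set {set 'I_n}} :=
  [set e in E | i \in e].
Definition degree (n : nat) (E : {set {set 'I_n}}) (i : 'I_n) : nat :=
  #|edges_at E i|.

Definition hconnected (n : nat) (E : {set {set 'I_n}}) : Prop :=
  forall i j : 'I_n, i != j ->
    exists (e1 : {set 'I_n}) (s : seq {set 'I_n}),
      [/\ all (fun e => e \in E) (e1 :: s),
          i \in e1, j \in last e1 s &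
          path (fun a b => a :&: b != set0) e1 s].

(* ((D + A) x^{k-1})_i = d_i x_i^{k-1} + sum_{e in E_i} prod_{j in e \ {i}} x_j *)
Definition signless_laplacian_apply (R : numDomainType) (n k : nat)
    (E : {set {set 'I_n}}) (x : 'I_n -> R) (i : 'I_n) : R :=
  (degree E i)%:R * x i ^+ (k.-1)
  + \sum_(e in edges_at E i) \prod_(j in e :\ i) x j.

Definition is_H_eigenvalue_signless_laplacian (R : numDomainType) (n k : nat)
    (E : {set {set 'I_n}}) (lam : R) : Prop :=
  exists x : 'I_n -> R, (exists i, x i != 0) /\
    forall i, signless_laplacian_apply k E x i = lam * x i ^+ (k.-1).

From HB Require Import structures.
From mathcomp Require Import all_boot all_order all_algebra.
Import Order.TTheory GRing.Theory Num.Theory.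
Local Open Scope ring_scope.

(* Suppose x <> 0 satisfies (D + A) x^{k-1} = 0 and let m > 0 be
   the largest value of |x_j|.  Since k - 1 is even, at a vertex p with
   |x_p| = m the equation reads  sum_{e in E_p} (m^{k-1} + prod_{e\p} x) = 0,
   and every summand is nonnegative because |prod_{e\p} x| <= m^{k-1}.  Hence
   prod_{e\p} x = -m^{k-1} for every edge e at p (extremal_edge_products).
   This forces |x_l| = m on the whole edge e (if r numbers in [0,m] have
   product m^r, all of them equal m), so every l in e is extremal too
   and  prod_e x = x_l * (-m^{k-1})  for all l in e: x is constant, equal to
   c, on e.  But then prod_e x = c^k = c m^{k-1} = -c m^{k-1}, so c = 0,
   contradicting |c| = m > 0.  Connectivity (with n >= k >= 3 vertices) is
   only used to provide an edge through a vertex where |x| is maximal. *)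

Lemma even_pow_norm {R : realDomainType} {k : nat} (x : R) :
  odd k -> x ^+ k.-1 = `|x| ^+ k.-1.
Proof.
move=> k_odd; rewrite -normrX ger0_norm // exprn_even_ge0 //.
by case: k k_odd => //= k; rewrite negbK.
Qed.

Lemma prod_eq_bound (R : realDomainType) (I : finType) (A : {set I})
  (a : I -> R) (m : R) : 0 < m -> (forall j, j \in A -> 0 <= a j <= m) ->
  \prod_(j in A) a j = m ^+ #|A| -> forall j, j \in A -> a j = m.
Proof.
move=> m_gt0 a_bnd prod_a j jA; apply/eqP; rewrite eq_le (andP (a_bnd j jA)).2.
rewrite leNgt; apply/negP => aj_lt.
have rest_gt0 : 0 < \prod_(i in A :\ j) m by apply: prodr_gt0.
have : \prod_(i in A) a i < \prod_(i in A) m.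
  rewrite (big_setD1 j jA) [X in _ < X](big_setD1 j jA) /=.
  apply: (le_lt_trans (y := a j * \prod_(i in A :\ j) m)); last by rewrite ltr_pM2r.
  apply: ler_wpM2l; first by case/andP: (a_bnd j jA).
  by apply: ler_prod => i /setD1P [_ iA]; apply: a_bnd.
by rewrite prod_a prodr_const ltxx.
Qed.

Lemma hconnected_edge_at {n : nat} {E : {set {set 'I_n}}} (i : 'I_n) :
  (1 < n)%N -> hconnected E -> exists e, e \in edges_at E i.
Proof.
move=> n_gt1 E_conn.
have [j ji] : exists j : 'I_n, j != i.
  have n_gt0 : (0 < n)%N by apply: ltnW.
  case: (eqVneq i (Ordinal n_gt0)) => [->|ne]; last by exists (Ordinal n_gt0); rewrite eq_sym.
  by exists (Ordinal n_gt1); apply/eqP => /(congr1 val).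
have ij : i != j by rewrite eq_sym.
have [e [s [/= /andP [eE _] ie _ _]]] := E_conn i j ij.
by exists e; rewrite inE eE ie.
Qed.

Lemma card_edge_minus {n k : nat} {E : {set {set 'I_n}}} {e : {set 'I_n}} {p : 'I_n} :
  k_uniform k E -> e \in E -> p \in e -> #|e :\ p| = k.-1.
Proof. by move=> E_unif eE pe; move: (cardsD1 p e); rewrite pe (E_unif e eE) add1n => ->. Qed.

Section ExtremalVertices.

Context {R : realDomainType} {n k : nat} {E : {set {set 'I_n}}} {x : 'I_n -> R} {m : R}.
Hypotheses (k_odd : odd k) (E_unif : k_uniform k E)
  (x_null : forall i, signless_laplacian_apply k E x i = 0)
  (x_bound : forall j, `|x j| <= m).

Lemma edge_product_bound {e : {set 'I_n}} {p : 'I_n} :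
  e \in edges_at E p -> `|\prod_(j in e :\ p) x j| <= m ^+ k.-1.
Proof.
rewrite inE => /andP [eE pe].
rewrite normr_prod -(card_edge_minus E_unif eE pe) -prodr_const.
by apply: ler_prod => j _; rewrite normr_ge0 x_bound.
Qed.

Lemma extremal_edge_products (p : 'I_n) : `|x p| = m ->
  forall e, e \in edges_at E p -> \prod_(j in e :\ p) x j = - m ^+ k.-1.
Proof.
move=> xp_max e ep.
have sum0 : \sum_(e in edges_at E p) (\prod_(j in e :\ p) x j + m ^+ k.-1) = 0.
  have null_p := x_null p.
  rewrite /signless_laplacian_apply (even_pow_norm (x p)) // xp_max in null_p.
  by rewrite big_split /= sumr_const -mulr_natl addrC.
apply/eqP; rewrite -addr_eq0; apply/eqP; move/psumr_eq0P: sum0; apply=> // e' e'p.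
have := edge_product_bound e'p.
by rewrite -lerBlDr sub0r ler_norml => /andP [].
Qed.

Lemma extremal_edge_tight {p : 'I_n} {e : {set 'I_n}} :
  0 < m -> `|x p| = m -> e \in edges_at E p -> forall l, l \in e -> `|x l| = m.
Proof.
move=> m_gt0 xp_max ep l le; case: (eqVneq l p) => [->//|lp].
have := ep; rewrite inE => /andP [eE pe].
apply: (@prod_eq_bound R _ (e :\ p) (fun l => `|x l|) m m_gt0).
- by move=> j _; rewrite normr_ge0 x_bound.
- rewrite -normr_prod extremal_edge_products // normrN.
  by rewrite (card_edge_minus E_unif eE pe) normrX ger0_norm // ltW.
- by rewrite in_setD1 lp le.
Qed.

Lemma no_extremal_edge {p : 'I_n} {e : {set 'I_n}} :
  0 < m -> `|x p| = m -> e \in edges_at E p -> False.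
Proof.
move=> m_gt0 xp_max ep; have := ep; rewrite inE => /andP [eE pe].
have mk_neq0 : m ^+ k.-1 != 0 by rewrite expf_neq0 // gt_eqF.
have tight := extremal_edge_tight m_gt0 xp_max ep.
have prod_e l : l \in e -> \prod_(j in e) x j = - (x l * m ^+ k.-1).
  move=> le; rewrite (big_setD1 l le) /= extremal_edge_products ?mulrN ?tight //.
  by rewrite inE eE le.
have x_const l : l \in e -> x l = x p.
  by move=> le; apply: (mulIf mk_neq0); apply: oppr_inj; rewrite -!prod_e.
have : \prod_(j in e) x j = x p * m ^+ k.-1.
  rewrite (eq_bigr (fun _ => x p)) ?prodr_const ?(E_unif e eE); last by move=> j /x_const.
  by rewrite -xp_max -even_pow_norm // -exprS prednK //; case: k k_odd.
rewrite (prod_e p) // => /eqP; rewrite eq_sym -subr_eq0 opprK -mulr2n mulrn_eq0 /= mulf_eq0.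
rewrite (negbTE mk_neq0) orbF => /eqP xp0.
by move: m_gt0; rewrite -xp_max xp0 normr0 ltxx.
Qed.

End ExtremalVertices.

Theorem proposition5p4 (R : realFieldType) (n k : nat) (E : {set {set 'I_n}}) :
  (3 <= k)%N -> odd k -> (k <= n)%N ->
  k_uniform k E -> hconnected E -> E != set0 ->
  ~ is_H_eigenvalue_signless_laplacian (R := R) k E 0.
Proof.
move=> k_ge3 k_odd k_le_n E_unif E_conn _ [x [[i0 xi0_neq0] x_eig]].
have x_null i : signless_laplacian_apply k E x i = 0 by rewrite x_eig mul0r.
have [i _ i_max] := @arg_maxP _ R _ i0 xpredT (fun j => `|x j|) isT.
have x_bound j : `|x j| <= `|x i| by apply: i_max.
have m_gt0 : 0 < `|x i| by apply: lt_le_trans (x_bound i0); rewrite normr_gt0.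
have n_gt1 : (1 < n)%N := leq_trans (isT : (2 <= 3)%N) (leq_trans k_ge3 k_le_n).
have [e ei] := hconnected_edge_at i n_gt1 E_conn.
exact: (no_extremal_edge k_odd E_unif x_null x_bound m_gt0 (erefl _) ei).
Qed.
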